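(* Let $R$ be a ring and let $\mathcal{L}$ and $\mathcal{G}$ be two classes of left $R$-modules such that $\mathcal{L}$ is closed under extensions and $0 \in \mathcal{L} \cap \mathcal{G}$. Then the following conditions are equivalent. (1) $\underline{\mathfrak{Pr}}^{-1}_{R\text{-Mod}}(\mathcal{L})=\mathcal{G}$, and $\mathrm{Hom}_{\mathscr{K}(R)}(M,N)=0$ for every $N \in \#\mathcal{G}$ and every $M \in \widetilde{\mathcal{L}}$. (2) $\underline{\mathfrak{Pr}}^{-1}_{\mathscr{C}(R)}(\widetilde{\mathcal{L}})=\#\mathcal{G}$.
   Context: $R$ is an associative ring with unit; modules are left $R$-modules; $R\text{-Mod}$ is the category of left $R$-modules, $\mathscr{C}(R)$ the category of (homologically indexed) complexes of modules, and $\mathscr{K}(R)$ the homotopy category, so $\mathrm{Hom}_{\mathscr{K}(R)}(M,N)$ is the group of homotopy classes of morphisms of complexes $M\to N$. For objects $M,N$ of an abelian category $\mathscr{A}$ with enough projectives ($\mathscr{A}=R\text{-Mod}$ or $\mathscr{C}(R)$), $M$ is $N$-subprojective if every morphism $M\to N$ factors through a projective object of $\mathscr{A}$. The subprojectivity domain $\underline{\mathfrak{Pr}}^{-1}_{\mathscr{A}}(M)$ is the class of all $N$ such that $M$ is $N$-subprojective; for a class $\mathfrak{C}$ of objects, $\underline{\mathfrak{Pr}}^{-1}_{\mathscr{A}}(\mathfrak{C})$ is the class of all $N$ such that every $C\in\mathfrak{C}$ is $N$-subprojective. For a class of modules $\mathcal{L}$: $\#\mathcal{L}$ is the class of complexes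 $X$ with every $X_n\in\mathcal{L}$; $\widetilde{\mathcal{L}}$ is the class of exact complexes $X$ with every cycle module $Z_n(X)=\mathrm{Ker}\,d_n^X\in\mathcal{L}$. *)

From HB Require Import structures.
From mathcomp Require Import all_boot all_order all_algebra.
Set Implicit Arguments. Unset Strict Implicit. Unset Printing Implicit Defensive.
Import GRing.Theory.
Local Open Scope ring_scope.

Definition kerpred (R : pzRingType) (M N : lmodType R) (f : {linear M -> N}) :
  pred M := fun x => f x == 0.

Lemma kerpred_submod (R : pzRingType) (M N : lmodType R) (f : {linear M -> N}) :
  submod_closed (kerpred f).
Proof.
split; first by rewrite unfold_in /kerpred /= linear0.
move=> a u v; rewrite !unfold_in /kerpred /= => /eqP fu /eqP fv.
by rewrite linearP fu fv scaler0 addr0.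
Qed.

HB.instance Definition _ (R : pzRingType) (M N : lmodType R) (f : {linear M -> N}) :=
  GRing.isSubmodClosed.Build R M (kerpred f) (kerpred_submod f).

Record kertype (R : pzRingType) (M N : lmodType R) (f : {linear M -> N}) :=
  KerElt { kerval : M; _ : kerval \in kerpred f }.

HB.instance Definition _ R M N f := [isSub for @kerval R M N f].
HB.instance Definition _ R M N f := [Choice of @kertype R M N f by <:].
HB.instance Definition _ R M N f := [SubChoice_isSubLmodule of @kertype R M N f by <:].

Definition Ker (R : pzRingType) (M N : lmodType R) (f : {linear M -> N}) : lmodType R :=
  kertype f.

Definition surj (A B : Type) (g : A -> B) := forall y, exists x, g x = y.

(* projective object of R-Mod: lifting along every epimorphism (= surjection) *)
Definition mod_projective (R : pzRingType) (P : lmodType R) : Prop :=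
  forall (M N : lmodType R) (g : {linear M -> N}) (f : {linear P -> N}),
    surj g -> exists h : {linear P -> M}, forall x, g (h x) = f x.

Definition mod_subproj (R : pzRingType) (M N : lmodType R) : Prop :=
  forall f : {linear M -> N}, exists (P : lmodType R) (a : {linear M -> P})
    (b : {linear P -> N}), mod_projective P /\ forall x, b (a x) = f x.

Definition PrInv_mod (R : pzRingType) (L : lmodType R -> Prop) (N : lmodType R) :=
  forall C, L C -> mod_subproj C N.

Definition is_zero_mod (R : pzRingType) (M : lmodType R) := forall x : M, x = 0.

Definition ext_closed (R : pzRingType) (L : lmodType R -> Prop) : Prop :=
  forall (A B C : lmodType R) (f : {linear A -> B}) (g : {linear B -> C}),
    injective f -> surj g -> (forall y, g y = 0 <-> exists x, f x = y) ->
    L A -> L C -> L B.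

(* ---------- complexes (homological indexing) ----------
   cdiff X n is the differential d_{n+1} : X_{n+1} -> X_n. *)
Record complex (R : pzRingType) := Complex {
  cobj :> int -> lmodType R;
  cdiff : forall n : int, {linear cobj (n + 1) -> cobj n};
  cdiff_sq : forall (n : int) (x : cobj (n + 1 + 1)), cdiff n (cdiff (n + 1) x) = 0 }.

Record chainmap (R : pzRingType) (X Y : complex R) := ChainMap {
  cmap :> forall n : int, {linear X n -> Y n};
  cmap_comm : forall (n : int) (x : X (n + 1)),
    cmap n (cdiff X n x) = cdiff Y n (cmap (n + 1) x) }.

(* projective object of C(R): lifting along every epimorphism
   (= degreewise surjective chain map) *)
Definition cx_projective (R : pzRingType) (P : complex R) : Prop :=
  forall (Y Z : complex R) (g : chainmap Y Z) (f : chainmap P Z),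
    (forall n, surj (g n)) ->
    exists h : chainmap P Y, forall n x, g n (h n x) = f n x.

Definition cx_subproj (R : pzRingType) (M N : complex R) : Prop :=
  forall f : chainmap M N, exists (P : complex R) (a : chainmap M P)
    (b : chainmap P N), cx_projective P /\ forall n x, b n (a n x) = f n x.

Definition PrInv_cx (R : pzRingType) (C : complex R -> Prop) (N : complex R) :=
  forall M, C M -> cx_subproj M N.

(* f is null-homotopic: f_{n} = d_{n+1} s_n + s_{n-1} d_n (written at degree n+1) *)
Definition null_homotopic (R : pzRingType) (X Y : complex R) (f : chainmap X Y) :=
  exists s : forall n : int, {linear X n -> Y (n + 1)},
    forall (n : int) (x : X (n + 1)),
      f (n + 1) x = cdiff Y (n + 1) (s (n + 1) x) + s n (cdiff X n x).

Definition homK_zero (R : pzRingType) (M N : complex R) :=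
  forall f : chainmap M N, null_homotopic f.

Definition sharp (R : pzRingType) (L : lmodType R -> Prop) (X : complex R) :=
  forall n, L (X n).

Definition cx_exact (R : pzRingType) (X : complex R) :=
  forall (n : int) (y : X (n + 1)), cdiff X n y = 0 ->
    exists x : X (n + 1 + 1), cdiff X (n + 1) x = y.

(* tilde L : exact complexes whose cycle modules Z_{n+1}(X) = Ker d_{n+1} are in L *)
Definition tilde (R : pzRingType) (L : lmodType R -> Prop) (X : complex R) :=
  cx_exact X /\ forall n : int, L (Ker (cdiff X n)).

(* Sums of disks on projective modules are projective complexes, and projective complexes are
   contractible with projective components.
   (1) => (2): if M is in tilde L and N in #G, a map f : M -> N is null-homotopic by (1); each
   component M_n -> N_(n+1) of the homotopy factors through a projective Q_n since M_n is in L
   and N_(n+1) in G, and then f factors through the sum of the disks on the Q_n.  Conversely, a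
   map C -> N_k with C in L extends to the sum of disks on C, which lies in tilde L; restricting a
   factorization of the extension through a projective complex to degree k factors C -> N_k.
   (2) => (1): the disk on N is contractible, so every map into it is null-homotopic; it thus
   lies in #G, or in the subprojectivity domain of tilde L, exactly when N lies in G, or in that
   of L.  Maps into complexes of #G factor through projective, hence contractible, complexes. *)

From HB Require Import structures.
From mathcomp Require Import all_boot all_order all_algebra zify.
From Stdlib Require Import ClassicalEpsilon.
Set Implicit Arguments. Unset Strict Implicit. Unset Printing Implicit Defensive.
Import GRing.Theory.
Local Open Scope ring_scope.

Lemma dependent_choice (I : Type) (T : I -> Type) (P : forall i, T i -> Prop) :
  (forall i, exists x, P i x) -> exists f : forall i, T i, forall i, P i (f i).
Proof.
move=> H; exists (fun i => proj1_sig (constructive_indefinite_description _ (H i))).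
by move=> i; case: constructive_indefinite_description.
Qed.

Lemma forall_succ (P : int -> Prop) : (forall n, P (n + 1)) -> forall m, P m.
Proof. by move=> H m; rewrite -(subrK 1 m). Qed.

(* [m - 1 + 1] is not convertible to [m], hence the cast. *)
Definition of_succ (T : int -> Type) (f : forall n, T (n + 1)) (m : int) : T m :=
  ecast j (T j) (subrK 1 m) (f (m - 1)).

Lemma of_succE (T : int -> Type) (f : forall n, T (n + 1)) n : of_succ f (n + 1) = f n.
Proof.
suff cast_pred i (e : i + 1 = n + 1) : ecast j (T j) e (f i) = f n by apply: cast_pred.
have ein := addIr _ e; subst i.
by rewrite (eq_irrelevance e erefl).
Qed.

Section Complexes.
Variable R : pzRingType.
Implicit Types (L : lmodType R -> Prop) (M N P W : complex R).

Definition linmap (U V : lmodType R) (f : U -> V) (fL : linear f) : {linear U -> V} :=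
  HB.pack f (GRing.isLinear.Build R U V *:%R f fL).

Lemma in_fst_linear (U V : lmodType R) : linear (fun x : U => (x, 0 : V)).
Proof. by move=> a x y; congr (_, _) => /=; rewrite scaler0 addr0. Qed.

Definition in_fst (U V : lmodType R) : {linear U -> (U * V)%type} :=
  linmap (@in_fst_linear U V).

Lemma mod_projective0 : mod_projective 'rV[R]_0.
Proof. by move=> M N g f _; exists \0 => x; rewrite [x]thinmx0 !linear0. Qed.

Lemma PrInv_mod0 L : PrInv_mod L 'rV[R]_0.
Proof. by move=> C _ f; exists 'rV[R]_0, f, idfun; split=> //; apply: mod_projective0. Qed.

Lemma ext_closed_iso L : ext_closed L -> L 'rV[R]_0 ->
  forall (B C : lmodType R) (u : {linear B -> C}), injective u -> surj u -> L C -> L B.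
Proof.
move=> HE L0 B C u u_inj u_surj LC.
apply: (HE _ _ _ (\0 : {linear 'rV[R]_0 -> B}) u) => //.
- by move=> x y _; rewrite [x]thinmx0 [y]thinmx0.
- move=> y; split=> [uy0|[x <-]]; last by rewrite linear0.
  by exists 0; apply: u_inj; rewrite uy0 !linear0.
Qed.

Lemma ker_val0 (A B : lmodType R) (f : {linear A -> B}) (z : Ker f) : f (val z) = 0.
Proof. by case: z => x /= /eqP. Qed.

Section KernelCorestriction.
Variables (A B C : lmodType R) (f : {linear A -> B}) (g : {linear C -> A}).
Hypothesis fg0 : forall x, f (g x) = 0.

Definition ker_corestr_fun x : Ker f := KerElt (introT eqP (fg0 x)).

Lemma ker_corestr_linear : linear ker_corestr_fun.
Proof. by move=> a x y; apply: val_inj; rewrite /= linearP. Qed.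

Definition ker_corestr : {linear C -> Ker f} := linmap ker_corestr_linear.
End KernelCorestriction.

(* Each [M (n + 2)] is an extension of [Ker (cdiff M n)] by [Ker (cdiff M (n + 1))]. *)
Lemma tilde_sharp L : ext_closed L -> forall M, tilde L M -> sharp L M.
Proof.
move=> HE M [M_exact ZL].
suff ML n : L (M (n + 1 + 1)) by apply: forall_succ; apply: forall_succ.
pose bd := ker_corestr (f := cdiff M n) (@cdiff_sq _ M n).
apply: (HE _ _ _ (val : {linear Ker (cdiff M (n + 1)) -> _}) bd) => //.
- exact: val_inj.
- move=> z; have [x xz] := M_exact n (val z) (ker_val0 z).
  by exists x; apply: val_inj.
- move=> y; split=> [bdy0|[z <-]]; last by apply: val_inj; rewrite /= ker_val0.
  have dy0 : cdiff M (n + 1) y = 0 by move: (congr1 val bdy0).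
  by exists (KerElt (introT eqP dy0)).
Qed.

Definition idcm P : chainmap P P := @ChainMap R P P (fun n => idfun) (fun n x => erefl).

Definition contractible P := null_homotopic (idcm P).

Lemma null_homotopic_through P : contractible P ->
  forall M N (a : chainmap M P) (b : chainmap P N) (f : chainmap M N),
  (forall n x, b n (a n x) = f n x) -> null_homotopic f.
Proof.
move=> [s Hs] M N a b f ab.
exists (fun n => b (n + 1) \o s n \o a n) => n x /=.
by rewrite -ab {1}[a _ x]Hs /= linearD !cmap_comm.
Qed.

Lemma contractible_homK_zero M W : contractible W -> homK_zero M W.
Proof. by move=> Wc f; apply: (null_homotopic_through Wc (b := idcm W)). Qed.

Section Disks.
Variable Q : int -> lmodType R.

(* The sum over [m] of the disks [Q m] in degrees [m] and [m - 1]: degree [m] holds the top of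
   the disk on [Q m] and the bottom of the disk on [Q (m + 1)]. *)
Definition disks_obj m : lmodType R := (Q m * Q (m + 1))%type.

Lemma disks_diff_linear m : linear (fun p : disks_obj (m + 1) => (0, p.1) : disks_obj m).
Proof. by move=> a p q; congr (_, _) => /=; rewrite scaler0 addr0. Qed.

Definition disks_diff m : {linear disks_obj (m + 1) -> disks_obj m} :=
  linmap (@disks_diff_linear m).

Lemma disks_diff_sq m p : disks_diff m (disks_diff (m + 1) p) = 0.
Proof. by []. Qed.

Definition disks : complex R := Complex disks_diff_sq.

Section FromDisks.
Variables (W : complex R) (beta : forall m, {linear Q m -> W m}).

Definition from_disks_fun m (p : disks m) : W m :=
  beta m p.1 + cdiff W m (beta (m + 1) p.2).

Lemma from_disks_linear m : linear (@from_disks_fun m).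
Proof. by move=> a p q; rewrite /from_disks_fun /= !linearP scalerDr addrACA. Qed.

Lemma from_disks_comm m (p : disks (m + 1)) :
  linmap (@from_disks_linear m) (cdiff disks m p) =
  cdiff W m (linmap (@from_disks_linear (m + 1)) p).
Proof. by rewrite /= /from_disks_fun /= !linear0 add0r linearD cdiff_sq addr0. Qed.

Definition from_disks : chainmap disks W := ChainMap from_disks_comm.
End FromDisks.

Section ToDisks.
Variables (M : complex R) (a : forall m, {linear M m -> Q (m + 1)}).

Definition to_disks_top : forall m, {linear M m -> Q m} :=
  of_succ (T := fun m => {linear M m -> Q m}) (fun n => a n \o cdiff M n).

Lemma to_disks_topE n x : to_disks_top (n + 1) x = a n (cdiff M n x).
Proof. by rewrite /to_disks_top of_succE. Qed.

Lemma to_disks_top_diff m x : to_disks_top m (cdiff M m x) = 0.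
Proof.
move: m x; apply: forall_succ => n x.
by rewrite to_disks_topE cdiff_sq linear0.
Qed.

Lemma to_disks_linear m : linear (fun x => (to_disks_top m x, a m x) : disks m).
Proof. by move=> c x y; congr (_, _) => /=; rewrite linearP. Qed.

Lemma to_disks_comm m (x : M (m + 1)) :
  linmap (@to_disks_linear m) (cdiff M m x) =
  cdiff disks m (linmap (@to_disks_linear (m + 1)) x).
Proof. by rewrite /= to_disks_top_diff to_disks_topE. Qed.

Definition to_disks : chainmap M disks := ChainMap to_disks_comm.
End ToDisks.

Lemma disks_projective : (forall m, mod_projective (Q m)) -> cx_projective disks.
Proof.
move=> Qproj Y Z g phi g_surj.
have [psi psiP] :=
  dependent_choice (fun m => Qproj m _ _ (g m) (phi m \o in_fst _ _) (g_surj m)).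
exists (from_disks psi) => m [x y] /=.
rewrite /from_disks_fun /= linearD cmap_comm !psiP /= -(@cmap_comm _ _ _ phi m (y, 0)) -linearD.
by congr (phi m _); congr (_, _) => /=; rewrite ?addr0 ?add0r.
Qed.

Lemma disks_tilde L : ext_closed L -> L 'rV[R]_0 -> (forall m, L (Q m)) -> tilde L disks.
Proof.
move=> HE L0 QL; split=> [n [y1 y2] /= /(congr1 snd) /= y10 | n].
  by exists (y2, 0); rewrite /= y10.
have top0 (z : Ker (cdiff disks n)) : (val z).1 = 0 by have /(congr1 snd) := ker_val0 z.
apply: (ext_closed_iso HE L0 (u := snd \o val)) (QL _).
- move=> z1 z2 z12; apply/val_inj/injective_projections => //.
  by rewrite !top0.
- by move=> q; exists (KerElt (introT eqP (erefl : cdiff disks n (0, q) = 0))).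
Qed.

End Disks.

Section DisksMap.
Variables (Q Q' : int -> lmodType R) (v : forall m, {linear Q m -> Q' m}).

Lemma disks_map_linear m :
  linear (fun p : disks Q m => (v m p.1, v (m + 1) p.2) : disks Q' m).
Proof. by move=> a p q; congr (_, _) => /=; rewrite linearP. Qed.

Lemma disks_map_comm m (p : disks Q (m + 1)) :
  linmap (@disks_map_linear m) (cdiff (disks Q) m p) =
  cdiff (disks Q') m (linmap (@disks_map_linear (m + 1)) p).
Proof. by rewrite /= linear0. Qed.

Definition disks_map : chainmap (disks Q) (disks Q') := ChainMap disks_map_comm.
End DisksMap.

(* The second components of a lift of the identity along [from_disks idfun : disks P -> P]
   form a contraction. *)
Lemma projective_contractible P : cx_projective P -> contractible P.
Proof.
move=> Pproj.
pose pi := from_disks (Q := fun m => P m) (fun m => idfun).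
have pi_surj n : surj (pi n).
  by move=> x; exists (x, 0); rewrite /= /from_disks_fun /= linear0 addr0.
have [h hK] := Pproj _ _ pi (idcm P) pi_surj.
exists (fun n => snd \o h n) => n x /=.
have /(congr1 snd) /= -> := @cmap_comm _ _ _ h n x.
exact: etrans (esym (hK (n + 1) x)) (addrC _ _).
Qed.

Lemma projective_component P : cx_projective P -> forall k, mod_projective (P k).
Proof.
move=> Pproj k Y Z u phi u_surj.
pose U := disks_map (Q := fun _ => Y) (Q' := fun _ => Z) (fun _ => u).
have U_surj n : surj (U n).
  by move=> [z1 z2]; have [y1 <-] := u_surj z1; have [y2 <-] := u_surj z2; exists (y1, y2).
have [h hP] := Pproj _ _ U (to_disks (dfwith (fun m => \0 : {linear P m -> Z}) phi)) U_surj.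
exists (snd \o h k) => x /=.
by have /(congr1 snd) /= -> := hP k x; rewrite dfwith_in.
Qed.

Lemma subproj_homK_zero M N : cx_subproj M N -> homK_zero M N.
Proof.
move=> MN f; have [P [a [b [Pproj ab]]]] := MN f.
exact: (null_homotopic_through (projective_contractible Pproj) ab).
Qed.

Definition factors_projective (A B : lmodType R) (g : {linear A -> B}) :=
  exists (Q : lmodType R) (a : {linear A -> Q}) (b : {linear Q -> B}),
    mod_projective Q /\ forall x, b (a x) = g x.

Definition cx_factors_projective M N (f : chainmap M N) :=
  exists (P : complex R) (a : chainmap M P) (b : chainmap P N),
    cx_projective P /\ forall n x, b n (a n x) = f n x.

(* The factor modules are indexed by the degree [m = n + 1] of the tops of their disks. *)
Lemma homotopy_factors_projective M W (f : chainmap M W)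
    (s : forall n, {linear M n -> W (n + 1)}) :
  (forall n x, f (n + 1) x = cdiff W (n + 1) (s (n + 1) x) + s n (cdiff M n x)) ->
  (forall n, factors_projective (s n)) -> cx_factors_projective f.
Proof.
move=> Hs s_proj.
have s_fac n : exists F : {Q : lmodType R & {linear Q -> W (n + 1)}},
    mod_projective (projT1 F) /\
    exists a : {linear M n -> projT1 F}, forall x, projT2 F (a x) = s n x.
  by have [Q [a [b [Qproj ab]]]] := s_proj n; exists (existT _ Q b); split; last exists a.
have [F FP] := dependent_choice s_fac.
pose G := of_succ (T := fun m => {Q : lmodType R & {linear Q -> W m}}) F.
pose Q m := projT1 (G m); pose beta m : {linear Q m -> W m} := projT2 (G m).
have GP n : mod_projective (Q (n + 1)) /\
    exists a : {linear M n -> Q (n + 1)}, forall x, beta (n + 1) (a x) = s n x.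
  by rewrite /beta /Q /G of_succE; apply: FP.
have [a aP] := dependent_choice (fun n => proj2 (GP n)).
exists (disks Q), (to_disks a), (from_disks beta); split.
  by apply: disks_projective; apply: forall_succ => n; case: (GP n).
apply: forall_succ => n x.
by rewrite /= /from_disks_fun /= to_disks_topE !aP Hs; apply: addrC.
Qed.

Lemma PrInv_cx_tilde_of_components L W : ext_closed L -> (forall k, PrInv_mod L (W k)) ->
  (forall M, tilde L M -> homK_zero M W) -> PrInv_cx (tilde L) W.
Proof.
move=> HE WL Whom M ML f; have [s Hs] := Whom M ML f.
apply: (homotopy_factors_projective Hs) => n.
exact: WL _ _ (tilde_sharp HE ML n) (s n).
Qed.

Lemma PrInv_cx_tilde_component L W : ext_closed L -> L 'rV[R]_0 ->
  PrInv_cx (tilde L) W -> forall k, PrInv_mod L (W k).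
Proof.
move=> HE L0 WL k C LC g.
pose beta := dfwith (fun m => \0 : {linear C -> W m}) g.
have [P [a [b [Pproj ab]]]] := WL _ (disks_tilde HE L0 (fun _ => LC)) (from_disks beta).
exists (P k), (a k \o in_fst _ _), (b k); split; first exact: projective_component.
by move=> c; rewrite /= ab /= /from_disks_fun /= /beta dfwith_in !linear0 addr0.
Qed.

Section Disk.
Variable N : lmodType R.

Definition N_if (b : bool) : lmodType R := if b then N else 'rV[R]_0.

Definition N_if_in b : {linear N -> N_if b} :=
  if b as c return {linear N -> N_if c} then idfun else \0.
Definition N_if_out b : {linear N_if b -> N} :=
  if b as c return {linear N_if c -> N} then idfun else \0.

Lemma N_if0 b (x : N_if b) : ~~ b -> x = 0.
Proof. by case: b x => // x _; apply: thinmx0. Qed.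

Definition disk_deg (m : int) := (m == 0) || (m == 1).

(* [disk_obj 0] is [N] itself, not merely a copy of it: [G] need not be closed under
   isomorphism. *)
Definition disk_obj m := N_if (disk_deg m).

Definition disk_diff m : {linear disk_obj (m + 1) -> disk_obj m} :=
  if m == 0 then N_if_in _ \o N_if_out _ : {linear disk_obj (m + 1) -> disk_obj m} else \0.

Definition disk_contr m : {linear disk_obj m -> disk_obj (m + 1)} :=
  if m == 0 then N_if_in _ \o N_if_out _ : {linear disk_obj m -> disk_obj (m + 1)} else \0.

Lemma disk_diff_sq m x : disk_diff m (disk_diff (m + 1) x) = 0.
Proof.
case: (boolP (disk_deg (m + 1 + 1))) => [deg2 | /(N_if0 x) ->]; last by rewrite !linear0.
by apply: N_if0; move: deg2; rewrite /disk_deg; lia.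
Qed.

Definition disk : complex R := Complex disk_diff_sq.

Lemma disk_contractible : contractible disk.
Proof.
exists disk_contr => n x /=.
case: (boolP (disk_deg (n + 1))) => [deg1 | /(N_if0 x) ->]; last by rewrite !linear0 addr0.
have /orP[/eqP n_1 | /eqP n0] : (n == -1) || (n == 0) by move: deg1; rewrite /disk_deg; lia.
  by subst n; rewrite /disk_diff /disk_contr /= addr0.
by subst n; rewrite /disk_diff /disk_contr /= add0r.
Qed.

Lemma disk_sharp (P : lmodType R -> Prop) : P N -> P 'rV[R]_0 -> sharp P disk.
Proof. by move=> PN P0 m; rewrite /= /disk_obj /N_if; case: disk_deg. Qed.

End Disk.
End Complexes.

Theorem theorem3p1 (R : pzRingType) (L G : lmodType R -> Prop) :
  ext_closed L ->
  (forall Z : lmodType R, is_zero_mod Z -> L Z /\ G Z) ->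
  ((forall N, PrInv_mod L N <-> G N) /\
     (forall M N : complex R, sharp G N -> tilde L M -> homK_zero M N))
  <-> (forall N : complex R, PrInv_cx (tilde L) N <-> sharp G N).
Proof.
move=> HE HZ; have [L0 G0] := HZ _ (@thinmx0 R 1).
split=> [[LG homK] N | LG].
  split=> [NL k | NG]; first exact/LG/(PrInv_cx_tilde_component HE L0 NL).
  by apply: (PrInv_cx_tilde_of_components HE _ (fun M => homK M N NG)) => k; apply/LG.
have disk_PrInv N : PrInv_mod L N -> PrInv_cx (tilde L) (disk N).
  move=> NL; apply: (PrInv_cx_tilde_of_components HE (disk_sharp NL (PrInv_mod0 (L := L)))).
  by move=> M _; apply: contractible_homK_zero (disk_contractible N).
split=> [N | M N NG ML]; last exact: subproj_homK_zero (proj2 (LG N) NG M ML).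
split=> [NL | NG]; first exact: (proj1 (LG _) (disk_PrInv N NL) 0).
exact: PrInv_cx_tilde_component HE L0 (proj2 (LG _) (disk_sharp NG G0)) 0.
Qed.
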